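(* Let $k\in\mathbb{R}$, $\upsilon$ a multiplier system of weight $k$, and assume $\rho:\Gamma\to GL_d(\mathbb{C})$ is an indecomposable representation such that $\mathcal{H}(k,\rho,\upsilon)\neq\{0\}$. Then $\rho(S^2)=\pm I$, and $$\mathcal{H}(\rho,\upsilon)=\bigoplus_{n\in\mathbb{Z}}\mathcal{H}(k+2n,\rho,\upsilon).$$
   Context: $\Gamma=SL(2,\mathbb{Z})$ acts on the upper half-plane $\mathbb{H}$ by Möbius transformations; $S=\begin{pmatrix}0&-1\\1&0\end{pmatrix}$. Complex powers use the principal branch of $\log$. A multiplier system of weight $k$ is a map $\upsilon:\Gamma\to\{|w|=1\}$ such that $\nu(\gamma,z)=\upsilon(\gamma)(cz+d)^k$ satisfies $\nu(\gamma\sigma,z)=\nu(\gamma,\sigma z)\nu(\sigma,z)$; it is also a multiplier system of weight $k+n$ for every $n\in\mathbb{Z}$. Slash: $(f|_k^\upsilon\gamma)(z)=\upsilon(\gamma)^{-1}(cz+d)^{-k}f(\gamma z)$. Moderate growth: $|f(x+iy)|\le y^N$ for $y>c$. $\mathcal{H}(k,\rho,\upsilon)$: column vectors $F$ of holomorphic moderate-growth functions with $F|_k^\upsilon\gamma=\rho(\gamma)F$ for all $\gamma$; $\mathcal{H}(\rho,\upsilon)=\bigoplus_{n\in\mathbb{Z}}\mathcal{H}(k+n,\rho,\upsilon)$. *)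

From HB Require Import structures.
From mathcomp Require Import all_boot all_order all_algebra.
From mathcomp Require Import all_classical all_reals all_analysis.
From mathcomp Require Import complex.

Set Implicit Arguments.
Unset Strict Implicit.
Unset Printing Implicit Defensive.
Import Order.TTheory GRing.Theory Num.Theory.
Import numFieldNormedType.Exports.
Local Open Scope ring_scope.
Local Open Scope complex_scope.

Section Defs.
Variable R : realType.
Local Notation C := R[i].

Definition upper (z : C) : Prop := 0 < complex.Im z.

Definition inGamma (g : 'M[int]_2) : Prop := \det g = 1.

Definition ent (g : 'M[int]_2) (i j : 'I_2) : C := (g i j)%:~R.
Definition ga g := ent g ord0 ord0.
Definition gb g := ent g ord0 ord_max.
Definition gc g := ent g ord_max ord0.
Definition gd g := ent g ord_max ord_max.

Definition mob (g : 'M[int]_2) (z : C) : C := (ga g * z + gb g) / (gc g * z + gd g).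
Definition jfac (g : 'M[int]_2) (z : C) : C := gc g * z + gd g.

Definition Smat : 'M[int]_2 :=
  \matrix_(i < 2, j < 2) (if i == j then 0 else if i == ord0 then -1 else 1).

(* principal argument in (-pi, pi] (atan2) *)
Definition parg (w : C) : R :=
  let x := complex.Re w in let y := complex.Im w in
  if 0 < x then atan (y / x)
  else if x < 0 then (if 0 <= y then atan (y / x) + pi else atan (y / x) - pi)
  else if 0 < y then pi / 2 else if y < 0 then - (pi / 2) else 0.

Definition cmod (w : C) : R := Num.sqrt (complex.Re w ^+ 2 + complex.Im w ^+ 2).

(* principal-branch complex power w^s = exp(s Log w), s real, w <> 0 *)
Definition cpow (w : C) (s : R) : C :=
  if w == 0 then 0
  else (powR (cmod w) s)%:C * ((cos (s * parg w)) +i* (sin (s * parg w))).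

Definition multiplier_system (k : R) (v : 'M[int]_2 -> C) : Prop :=
  (forall g, inGamma g -> `|v g| = 1) /\
  (forall g s z, inGamma g -> inGamma s -> upper z ->
     v (g *m s) * cpow (jfac (g *m s) z) k =
     (v g * cpow (jfac g (mob s z)) k) * (v s * cpow (jfac s z) k)).

Definition representation d (rho : 'M[int]_2 -> 'M[C]_d) : Prop :=
  (forall g, inGamma g -> rho g \in unitmx) /\
  (forall g s, inGamma g -> inGamma s -> rho (g *m s) = rho g *m rho s).

(* A subspace of C^d (column vectors) is encoded by the row space of U:
   v in the subspace iff v^T in the row space of U.  Invariance under rho g
   (acting on column vectors) reads (U *m (rho g)^T <= U)%MS. *)
Definition rho_invariant d (rho : 'M[int]_2 -> 'M[C]_d) (U : 'M[C]_d) : Prop :=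
  forall g, inGamma g -> (U *m (rho g)^T <= U)%MS.

Definition indecomposable d (rho : 'M[int]_2 -> 'M[C]_d) : Prop :=
  (0 < d)%N /\
  forall U W : 'M[C]_d, rho_invariant rho U -> rho_invariant rho W ->
    (U + W == (1%:M : 'M[C]_d))%MS -> (U :&: W == (0 : 'M[C]_d))%MS ->
    U = 0 \/ W = 0.

Definition holomorphic_on_H (f : C -> C) : Prop :=
  forall z, upper z -> derivable (f : C^o -> C^o) z 1.

Definition moderate_growth (f : C -> C) : Prop :=
  exists (N : nat) (c : R), forall x y : R, c < y -> cmod (f (x +i* y)) <= y ^+ N.

Definition slash d (k : R) (v : 'M[int]_2 -> C) (F : C -> 'cV[C]_d)
  (g : 'M[int]_2) (z : C) : 'cV[C]_d :=
  ((v g)^-1 * cpow (jfac g z) (- k)) *: F (mob g z).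

Definition inH d (k : R) (rho : 'M[int]_2 -> 'M[C]_d) (v : 'M[int]_2 -> C)
  (F : C -> 'cV[C]_d) : Prop :=
  (forall i : 'I_d, holomorphic_on_H (fun z => F z i ord0)) /\
  (forall i : 'I_d, moderate_growth (fun z => F z i ord0)) /\
  (forall g z, inGamma g -> upper z -> slash k v F g z = rho g *m F z).

(* F is the zero element (functions are considered on the upper half-plane) *)
Definition zero_on_H d (F : C -> 'cV[C]_d) : Prop := forall z, upper z -> F z = 0.

End Defs.

From HB Require Import structures.
From mathcomp Require Import all_boot all_order all_algebra.
From mathcomp Require Import all_classical all_reals all_analysis.
From mathcomp Require Import complex ring.
Import Order.TTheory GRing.Theory Num.Theory.
Local Open Scope ring_scope.
Local Open Scope complex_scope.

(* The matrix -I = S^2 is central in SL(2,Z) and squares to 1, so rho(-I) is an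
   involution commuting with rho; its two eigenspaces are complementary invariant
   subspaces, and indecomposability forces rho(-I) = e I with e = +-1.  Since -I
   acts trivially on the upper half-plane with cz + d = -1, the transformation law
   at -I reads c_k F = e F, where c_k = v(-I)^-1 (-1)^(-k); so a nonzero F of
   weight k gives c_k = e.  Shifting the weight by an odd integer flips the sign
   of (-1)^(-k), so any G of such a weight satisfies -e G = e G, i.e. G = 0. *)

Lemma scalerIv {F : fieldType} {V : lmodType F} {x : V} :
  x != 0 -> injective ( *:%R^~ x : F -> V).
Proof.
move=> x_neq0 a b /eqP; rewrite -subr_eq0 -scalerBl scaler_eq0 (negbTE x_neq0).
by rewrite orbF subr_eq0 => /eqP.
Qed.

Lemma scaleNr_eq_self {F : numFieldType} {V : lmodType F} {a : F} {x : V} :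
  a != 0 -> - a *: x = a *: x -> x = 0.
Proof.
move=> a_neq0 /eqP; rewrite -subr_eq0 -scalerBl scaler_eq0 -opprD oppr_eq0.
by rewrite -mulr2n mulrn_eq0 (negbTE a_neq0) orbF => /eqP.
Qed.

Section Involution.
Context {F : fieldType} {n : nat}.
Hypothesis two_neq0 : (2 : F) != 0.
Implicit Type B : 'M[F]_n.

Lemma kermx_subr1_cap_addr1 B :
  (kermx (B - 1%:M) :&: kermx (B + 1%:M) == (0 : 'M[F]_n))%MS.
Proof.
set X := (kermx (B - 1%:M) :&: kermx (B + 1%:M))%MS.
have XBm : X *m (B - 1%:M) = 0 by apply/sub_kermxP; exact: capmxSl.
have XBp : X *m (B + 1%:M) = 0 by apply/sub_kermxP; exact: capmxSr.
have : X *m ((B + 1%:M) - (B - 1%:M)) = 0 by rewrite mulmxBr XBm XBp subr0.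
rewrite opprB [1%:M - B]addrC addrACA subrr add0r mulmxDr mulmx1 -mulr2n -scaler_nat.
by move/eqP; rewrite scaler_eq0 (negbTE two_neq0) /= => /eqP ->; rewrite /eqmx submx_refl.
Qed.

Lemma involution_add1_sub_kermx B :
  B *m B = 1%:M -> ((1%:M + B)%R <= kermx (B - 1%:M))%MS.
Proof.
by move=> BB; apply/sub_kermxP; rewrite mulmxDl mul1mx mulmxBr BB mulmx1 addrA subrK subrr.
Qed.

Lemma involution_sub1_sub_kermx B :
  B *m B = 1%:M -> ((1%:M - B)%R <= kermx (B + 1%:M))%MS.
Proof.
by move=> BB; apply/sub_kermxP; rewrite mulmxBl mul1mx mulmxDr BB mulmx1 [1%:M + B]addrC subrr.
Qed.

Lemma involution_kermx_adds B :
  B *m B = 1%:M -> (kermx (B - 1%:M) + kermx (B + 1%:M) == 1%:M)%MS.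
Proof.
move=> BB; apply/andP; split; first exact: submx1.
have halves : 2^-1 *: ((1%:M + B) + (1%:M - B)) = 1%:M :> 'M[F]_n.
  by rewrite addrACA subrr addr0 -mulr2n -scaler_nat scalerA mulVf // scale1r.
rewrite -[X in (X <= _)%MS]halves; apply/scalemx_sub/addmx_sub_adds.
- exact: involution_add1_sub_kermx B BB.
- exact: involution_sub1_sub_kermx B BB.
Qed.

End Involution.

Lemma inGamma1 : inGamma 1.
Proof. by rewrite /inGamma det1. Qed.

Lemma inGammaN1 : inGamma (-1).
Proof. by rewrite /inGamma -scaleN1r detZ det1 mulr1 sqrrN expr1n. Qed.

Lemma Smat_sqr : Smat *m Smat = -1.
Proof.
apply/matrixP => i j; rewrite !mxE big_ord_recr big_ord_recr big_ord0 /= !mxE.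
by case: i => [[|[|i]] Hi] //; case: j => [[|[|j]] Hj].
Qed.

Section Representation.
Context {R : realType} {d : nat} {rho : 'M[int]_2 -> 'M[R[i]]_d}.

Lemma indecomposable_central_involution (A : 'M[R[i]]_d) :
  indecomposable rho -> (forall g, inGamma g -> comm_mx (rho g) A) ->
  A *m A = 1%:M -> A = 1%:M \/ A = - 1%:M.
Proof.
move=> [_ rho_indec] commA AA; set B := A^T.
have two_neq0 : (2 : R[i]) != 0 by rewrite pnatr_eq0.
have BB : B *m B = 1%:M by rewrite -trmx_mul AA trmx1.
have commB g : inGamma g -> comm_mx (rho g)^T B.
  by move=> g_in; rewrite /comm_mx -!trmx_mul commA.
have invBm : rho_invariant rho (kermx (B - 1%:M)) := fun g g_in =>
  comm_mx_stable_ker (comm_mx_sym (comm_mxD (commB g g_in) (comm_mxN (comm_mx1 _)))).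
have invBp : rho_invariant rho (kermx (B + 1%:M)) := fun g g_in =>
  comm_mx_stable_ker (comm_mx_sym (comm_mxD (commB g g_in) (comm_mx1 _))).
rewrite -[A]trmxK -/B.
have [Bm0|Bp0] := rho_indec _ _ invBm invBp
  (involution_kermx_adds two_neq0 B BB) (kermx_subr1_cap_addr1 two_neq0 B).
- right; move: (involution_add1_sub_kermx B BB).
  rewrite Bm0 submx0 addrC addr_eq0 => /eqP ->.
  by rewrite raddfN /= trmx1.
- left; move: (involution_sub1_sub_kermx B BB).
  rewrite Bp0 submx0 subr_eq0 => /eqP <-.
  by rewrite trmx1.
Qed.

Lemma representation1 : representation rho -> rho 1 = 1%:M.
Proof.
move=> [rho_unit rho_mul]; have := rho_mul _ _ inGamma1 inGamma1.
rewrite mul1mx => rho11.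
by rewrite -[LHS](mulKmx (rho_unit _ inGamma1)) -rho11 (mulVmx (rho_unit _ inGamma1)).
Qed.

Lemma representationN1 :
  representation rho -> indecomposable rho -> rho (-1) = 1%:M \/ rho (-1) = - 1%:M.
Proof.
move=> rhoR rhoI; have [_ rho_mul] := rhoR.
apply: indecomposable_central_involution => [//|g g_in|].
  rewrite /comm_mx -(rho_mul _ _ g_in inGammaN1) -(rho_mul _ _ inGammaN1 g_in).
  by rewrite mulmxN mulNmx mulmx1 mul1mx.
by rewrite -(rho_mul _ _ inGammaN1 inGammaN1) mulmxN mulmx1 opprK representation1.
Qed.

End Representation.

Lemma jfacN1 (R : realType) (z : R[i]) : jfac (-1) z = -1.
Proof. by rewrite /jfac /gc /gd /ent !mxE /= mul0r add0r. Qed.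

Lemma mobN1 (R : realType) (z : R[i]) : mob (-1) z = z.
Proof.
rewrite /mob /ga /gb /gc /gd /ent !mxE /= !(oppr0, mulr0z, mulrNz, mulr1z).
by rewrite mul0r !addr0 add0r mulN1r invrN1 mulrN1 opprK.
Qed.

Lemma cpowN1 (R : realType) (t : R) : cpow (-1) t = cos (t * pi) +i* sin (t * pi).
Proof.
rewrite /cpow oppr_eq0 oner_eq0 /=.
have -> : cmod (-1 : R[i]) = 1 by rewrite /cmod /= oppr0 sqrrN expr1n expr0n addr0 sqrtr1.
have -> : parg (-1 : R[i]) = pi.
  rewrite /parg /= oppr0 mul0r atan0 add0r ltrN10 lexx.
  by rewrite ltNge ltW // ltrN10.
by rewrite powR1 mul1r.
Qed.

Lemma periodicz {U V : zmodType} {f : U -> V} {T : U} :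
  periodic f T -> forall (m : int) a, f (a + T *~ m) = f a.
Proof.
move=> fT [p|p] a; first exact: periodicn.
by rewrite NegzE mulrNz -[in RHS](subrK (T *~ p.+1) a) periodicn.
Qed.

Lemma cpowN1_odd_shift (R : realType) (k : R) (n : int) :
  cpow (-1) (- (k + (2 * n + 1)%:~R)) = - cpow (-1) (- k).
Proof.
rewrite !cpowN1.
have -> : - (k + (2 * n + 1)%:~R) * pi = - k * pi + (pi *+ 2) *~ (- n - 1) + pi.
  by rewrite -mulrzr; ring.
rewrite cosDpi sinDpi (periodicz (@cosD2pi R)) (periodicz (@sinD2pi R)).
by apply/eqP; rewrite eq_complex /= !eqxx.
Qed.

Lemma inH_slashN1 {R : realType} {s : R} {d : nat} {rho : 'M[int]_2 -> 'M[R[i]]_d}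
    {v : 'M[int]_2 -> R[i]} {F : R[i] -> 'cV[R[i]]_d} {z : R[i]} :
  inH s rho v F -> upper z -> ((v (-1))^-1 * cpow (-1) (- s)) *: F z = rho (-1) *m F z.
Proof.
by move=> [_ [_ F_slash]] z_up; rewrite -(F_slash _ _ inGammaN1 z_up) /slash jfacN1 mobN1.
Qed.

Theorem lemma2p15 (R : realType) (k : R) (v : 'M[int]_2 -> R[i]) (d : nat)
  (rho : 'M[int]_2 -> 'M[R[i]]_d) :
  multiplier_system k v ->
  representation rho ->
  indecomposable rho ->
  (exists F : R[i] -> 'cV[R[i]]_d, inH k rho v F /\ ~ zero_on_H F) ->
  (rho (Smat *m Smat) = 1%:M \/ rho (Smat *m Smat) = - 1%:M) /\
  (forall (n : int) (F : R[i] -> 'cV[R[i]]_d),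
     inH (k + (2 * n + 1)%:~R) rho v F -> zero_on_H F).
Proof.
move=> _ rhoR rhoI [F [FH /existsNP [z0 /not_implyP [z0_up /eqP Fz0]]]].
have rhoN1 := representationN1 rhoR rhoI.
rewrite Smat_sqr; split=> [//|n G GH z z_up].
have [e e_neq0 rhoN1e] : exists2 e : R[i], e != 0 & rho (-1) = e%:M.
  by case: rhoN1 => ->; [exists 1 | exists (-1); rewrite ?raddfN]; rewrite ?oppr_eq0 ?oner_eq0.
have eigF := inH_slashN1 FH z0_up; have eigG := inH_slashN1 GH z_up.
rewrite rhoN1e mul_scalar_mx in eigF; rewrite rhoN1e mul_scalar_mx in eigG.
have ce := scalerIv Fz0 _ _ eigF.
rewrite cpowN1_odd_shift mulrN ce in eigG.
exact: (scaleNr_eq_self (V := 'cV[R[i]]_d) e_neq0 eigG).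
Qed.
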